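(* Let $A,C$ be groups, $i_P,i_N:C\to A$ injective homomorphisms, $H=\langle A,t\mid i_N(c)=t\,i_P(c)\,t^{-1}\ \forall c\in C\rangle$, and $p:H\to\mathbb Z$ the epimorphism with $p(t)=1$, $p(A)=0$. For $k\ge0$ let $A_k\le H$ be the subgroup generated by all $t^{-i}at^{i}$ with $a\in A$, $0\le i\le k$, and let $A_{-1}=i_N(C)$. Let $w\in H$ with $p(w)=1$. Then either $w$ is conjugate to $at$ for some $a\in A$, or there is some $k\in\mathbb Z_{>0}$ and $m\ge1$ such that a conjugate of $w$ can be written as $a_1t^{-1}b_1t\cdots a_mt^{-1}b_mt\,x\,t$ with $a_i\in A_{k-1}\setminus t^{-1}A_{k-2}t$, $b_i\in A_{k-1}\setminus A_{k-2}$, and $x\in A_{k-1}$. *)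

From Stdlib Require Import ZArith List Lia.
Import ListNotations.
Set Implicit Arguments.

Record Group := {
  gcar :> Type;
  gmul : gcar -> gcar -> gcar;
  gone : gcar;
  ginv : gcar -> gcar;
  gassoc : forall x y z, gmul x (gmul y z) = gmul (gmul x y) z;
  gone_l : forall x, gmul gone x = x;
  gone_r : forall x, gmul x gone = x;
  ginv_l : forall x, gmul (ginv x) x = gone;
  ginv_r : forall x, gmul x (ginv x) = gone
}.

Arguments gmul {g}.
Arguments gone {g}.
Arguments ginv {g}.

Definition is_hom (G K : Group) (f : G -> K) : Prop :=
  forall x y : G, f (gmul x y) = gmul (f x) (f y).
Arguments is_hom {G K}.

Fixpoint gpow_nat (G : Group) (x : G) (n : nat) : G :=
  match n with O => gone | S n' => gmul x (gpow_nat G x n') end.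
Arguments gpow_nat {G}.
Definition gpow (G : Group) (x : G) (z : Z) : G :=
  match z with
  | Z0 => gone
  | Zpos p => gpow_nat x (Pos.to_nat p)
  | Zneg p => ginv (gpow_nat x (Pos.to_nat p))
  end.
Arguments gpow {G}.

Definition Zgroup : Group.
Proof.
  refine (@Build_Group Z Z.add 0%Z Z.opp _ _ _ _ _);
  intros; lia.
Defined.

Inductive gen (G : Group) (S : G -> Prop) : G -> Prop :=
| gen_base : forall x, S x -> gen G S x
| gen_one : gen G S gone
| gen_mul : forall x y, gen G S x -> gen G S y -> gen G S (gmul x y)
| gen_inv : forall x, gen G S x -> gen G S (ginv x).
Arguments gen {G}.

(* H (with jA : A -> H and stable letter t) is the HNN extension
   <A, t | iN(c) = t iP(c) t^-1 (c in C)>, expressed by its universal property. *)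
Definition is_HNN (A C H : Group) (iP iN : C -> A) (jA : A -> H) (t : H) : Prop :=
  is_hom jA /\
  (forall c, jA (iN c) = gmul t (gmul (jA (iP c)) (ginv t))) /\
  (forall (G : Group) (f : A -> G) (g : G),
      is_hom f ->
      (forall c, f (iN c) = gmul g (gmul (f (iP c)) (ginv g))) ->
      exists phi : H -> G,
        is_hom phi /\ (forall a, phi (jA a) = f a) /\ phi t = g /\
        forall psi : H -> G,
          is_hom psi -> (forall a, psi (jA a) = f a) -> psi t = g ->
          forall h, psi h = phi h).

(* A_k for k >= 0: generated by t^-i a t^i, a in A, 0 <= i <= k;
   A_k for k < 0: iN(C) (only k = -1 is used). *)
Definition Asub (A C H : Group) (iN : C -> A) (jA : A -> H) (t : H) (k : Z) : H -> Prop :=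
  if (0 <=? k)%Z then
    gen (fun h => exists (a : A) (i : nat),
            (Z.of_nat i <= k)%Z /\
            h = gmul (gpow t (- Z.of_nat i)) (gmul (jA a) (gpow t (Z.of_nat i))))
  else fun h => exists c : C, h = jA (iN c).

Definition conj_by (H : Group) (g x : H) : H := gmul g (gmul x (ginv g)).

Definition alt_word (H : Group) (t : H) (l : list (H * H)) : H :=
  fold_right (fun ab acc => gmul (gmul (fst ab) (gmul (ginv t) (gmul (snd ab) t))) acc)
             gone l.
Arguments is_HNN {A C H}.
Arguments Asub {A C H}.
Arguments conj_by {H}.
Arguments alt_word {H}.

(* Since H is generated by jA(A) and t, every element has the form t^j c t^-j' with c in
   some A_m, and p(w) = 1 forces j = j' + 1, so w is conjugate to c t.  An element of
   A_(m+1) is an alternating product a_1 t^-1 b_1 t ... a_n t^-1 b_n t x with all letters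
   in A_m.  If some a_i lies in t^-1 A_(m-1) t, or some b_i in A_(m-1), the neighbouring
   t-letters cancel into an adjacent letter (for a_1 after a cyclic conjugation) and the
   word gets shorter.  Either no such letter remains, which is the second alternative with
   k = m + 1, or the word empties and w is conjugate to x t with x in A_m; descending in m
   ends at A_0 = jA(A), the first alternative. *)

From Stdlib Require Import ZArith List Lia Classical ProofIrrelevance.
Import ListNotations.

Section GroupFacts.
Context {G : Group}.
Implicit Types x y : G.

Lemma gmulKV x y : gmul x (gmul (ginv x) y) = y.
Proof. now rewrite gassoc, ginv_r, gone_l. Qed.

Lemma gmulVK x y : gmul (ginv x) (gmul x y) = y.
Proof. now rewrite gassoc, ginv_l, gone_l. Qed.

Lemma ginv_unique x y : gmul x y = gone -> ginv x = y.
Proof. intro E. now rewrite <- (gone_r _ (ginv x)), <- E, gmulVK. Qed.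

Lemma ginv_one : ginv (@gone G) = gone.
Proof. apply ginv_unique, gone_l. Qed.

Lemma ginvK x : ginv (ginv x) = x.
Proof. apply ginv_unique, ginv_l. Qed.

Lemma ginvM x y : ginv (gmul x y) = gmul (ginv y) (ginv x).
Proof. apply ginv_unique. now rewrite <- gassoc, gmulKV, ginv_r. Qed.

Lemma gpow_nat_Sr x n : gpow_nat x (S n) = gmul (gpow_nat x n) x.
Proof.
  induction n as [|n IH].
  - cbn. now rewrite gone_r, gone_l.
  - change (gpow_nat x (S (S n))) with (gmul x (gpow_nat x (S n))).
    rewrite IH at 1. apply gassoc.
Qed.

Lemma gpow_of_nat x i : gpow x (Z.of_nat i) = gpow_nat x i.
Proof. destruct i as [|i]; [reflexivity|]. cbn [Z.of_nat gpow]. now rewrite SuccNat2Pos.id_succ. Qed.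

Lemma gpow_opp_of_nat x i : gpow x (- Z.of_nat i) = ginv (gpow_nat x i).
Proof.
  destruct i as [|i]; [symmetry; apply ginv_one|].
  cbn [Z.of_nat Z.opp gpow]. now rewrite SuccNat2Pos.id_succ.
Qed.

End GroupFacts.

Ltac group_simpl := repeat first
  [ rewrite <- gassoc | rewrite ginvM | rewrite ginvK | rewrite ginv_one
  | rewrite gone_l | rewrite gone_r | rewrite ginv_r | rewrite ginv_l
  | rewrite gmulKV | rewrite gmulVK ].

Section Homomorphisms.
Context {G K : Group} (f : G -> K).
Hypothesis hf : is_hom f.

Lemma hom_one : f gone = gone.
Proof.
  assert (E := hf gone gone). rewrite gone_l in E.
  now rewrite <- (gmulVK (f gone) (f gone)), <- E, ginv_l.
Qed.

Lemma hom_inv x : f (ginv x) = ginv (f x).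
Proof. symmetry. apply ginv_unique. now rewrite <- hf, ginv_r, hom_one. Qed.

End Homomorphisms.

Section Generation.
Context {G : Group} (S : G -> Prop).

Lemma gen_mono (S' : G -> Prop) h : (forall x, S x -> S' x) -> gen S h -> gen S' h.
Proof.
  intros hS gh. induction gh.
  - now apply gen_base, hS.
  - apply gen_one.
  - now apply gen_mul.
  - now apply gen_inv.
Qed.

Lemma gen_ind_left (Q : G -> Prop) :
  Q gone ->
  (forall s z, S s -> Q z -> Q (gmul s z)) ->
  (forall s z, S s -> Q z -> Q (gmul (ginv s) z)) ->
  forall h, gen S h -> Q h.
Proof.
  intros Q1 QS QV h gh.
  enough (E : forall z, Q z -> Q (gmul h z) /\ Q (gmul (ginv h) z)).
  { rewrite <- (gone_r _ h). now apply E. }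
  induction gh as [s hs| |x y _ IHx _ IHy|x _ IH]; intros z Qz.
  - auto.
  - now rewrite ginv_one, gone_l.
  - rewrite ginvM, <- !gassoc. split; [apply IHx, IHy | apply IHy, IHx]; auto.
  - rewrite ginvK. split; apply IH; auto.
Qed.

Lemma gen_sig_eq (x y : {h : G | gen S h}) : proj1_sig x = proj1_sig y -> x = y.
Proof. apply eq_sig_hprop. intros; apply proof_irrelevance. Qed.

Definition gen_group : Group.
Proof.
  refine (@Build_Group {h : G | gen S h}
    (fun x y => exist _ (gmul (proj1_sig x) (proj1_sig y)) (gen_mul (proj2_sig x) (proj2_sig y)))
    (exist _ gone (gen_one G S))
    (fun x => exist _ (ginv (proj1_sig x)) (gen_inv (proj2_sig x))) _ _ _ _ _);
  intros; apply gen_sig_eq; cbn;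
  first [apply gassoc | apply gone_l | apply gone_r | apply ginv_l | apply ginv_r].
Defined.

End Generation.

(* Uniqueness in the universal property, applied to the subgroup generated by jA(A) and t. *)
Lemma HNN_generated (A C H : Group) (iP iN : C -> A) (jA : A -> H) (t : H) :
  is_HNN iP iN jA t -> forall h, gen (fun h => (exists a, h = jA a) \/ h = t) h.
Proof.
  intros (hjA & rel & univ) h.
  set (S := fun h => (exists a, h = jA a) \/ h = t).
  assert (hA : forall a, gen S (jA a)) by (intro a; apply gen_base; left; eauto).
  assert (ht : gen S t) by (apply gen_base; now right).
  destruct (univ (gen_group S) (fun a => exist _ (jA a) (hA a)) (exist _ t ht))
    as (phi & hphi & phiA & phit & _).
  { intros x y. apply gen_sig_eq, hjA. }
  { intro c. apply gen_sig_eq, rel. }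
  destruct (univ H jA t hjA rel) as (phi0 & _ & _ & _ & uniq).
  assert (E : h = proj1_sig (phi h)).
  { transitivity (phi0 h); [|symmetry].
    - now apply (uniq (fun h => h)).
    - apply (uniq (fun h => proj1_sig (phi h))).
      + intros x y. now rewrite hphi.
      + intro a. now rewrite phiA.
      + now rewrite phit. }
  rewrite E. apply proj2_sig.
Qed.

Lemma conj_by_mul {G : Group} (g h w : G) : conj_by (gmul g h) w = conj_by g (conj_by h w).
Proof. unfold conj_by. now group_simpl. Qed.

Section AltWord.
Context {G : Group} (t : G).

Lemma alt_word_nil : alt_word t [] = gone.
Proof. reflexivity. Qed.

Lemma alt_word_cons a b l :
  alt_word t ((a, b) :: l) = gmul (gmul a (gmul (ginv t) (gmul b t))) (alt_word t l).
Proof. reflexivity. Qed.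

Lemma alt_word_app l1 l2 : alt_word t (l1 ++ l2) = gmul (alt_word t l1) (alt_word t l2).
Proof.
  induction l1 as [|[a b] l1 IH]; cbn [app].
  - now rewrite alt_word_nil, gone_l.
  - rewrite !alt_word_cons, IH. now group_simpl.
Qed.

Lemma alt_word_single a b : alt_word t [(a, b)] = gmul a (gmul (ginv t) (gmul b t)).
Proof. now rewrite alt_word_cons, alt_word_nil, gone_r. Qed.

Lemma alt_word_merge_next a b a' b' l :
  alt_word t ((a, b) :: (a', b') :: l)
  = alt_word t ((gmul (gmul a (gmul (ginv t) (gmul b t))) a', b') :: l).
Proof. rewrite !alt_word_cons. now group_simpl. Qed.

Lemma alt_word_merge_prev a b y b' l :
  alt_word t ((a, b) :: (gmul (ginv t) (gmul y t), b') :: l)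
  = alt_word t ((a, gmul b (gmul y b')) :: l).
Proof. rewrite !alt_word_cons. now group_simpl. Qed.

Lemma conj_alt_word_rotate y b l x :
  conj_by (gmul (ginv t) (gmul (ginv (gmul y b)) t))
    (gmul (alt_word t ((gmul (ginv t) (gmul y t), b) :: l)) (gmul x t))
  = gmul (alt_word t l) (gmul (gmul x (gmul y b)) t).
Proof. unfold conj_by. rewrite alt_word_cons. now group_simpl. Qed.

End AltWord.

Section Levels.
Variables (A H : Group) (jA : A -> H) (t : H).
Hypothesis hjA : is_hom jA.

Definition level_gen (m : nat) (h : H) : Prop :=
  exists a i, i <= m /\ h = gmul (ginv (gpow_nat t i)) (gmul (jA a) (gpow_nat t i)).

Definition Alevel (m : nat) : H -> Prop := gen (level_gen m).

Lemma Alevel_mono m m' h : m <= m' -> Alevel m h -> Alevel m' h.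
Proof.
  intro hm. apply gen_mono. intros x (a & i & hi & ->). exists a, i. split; [lia|easy].
Qed.

Lemma jA_Alevel m a : Alevel m (jA a).
Proof. apply gen_base. exists a, 0. split; [lia|]. cbn. now group_simpl. Qed.

Lemma Alevel0 h : Alevel 0 h -> exists a, h = jA a.
Proof.
  intro gh. induction gh as [x (a & i & hi & ->)| |x y _ (a & ->) _ (b & ->)|x _ (a & ->)].
  - exists a. replace i with 0 by lia. cbn. now group_simpl.
  - exists gone. symmetry. now apply hom_one.
  - exists (gmul a b). symmetry. apply hjA.
  - exists (ginv a). symmetry. now apply hom_inv.
Qed.

Lemma Alevel_conj m h : Alevel m h -> Alevel (S m) (gmul (ginv t) (gmul h t)).
Proof.
  intro gh. induction gh as [x (a & i & hi & ->)| |x y _ IHx _ IHy|x _ IH].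
  - apply gen_base. exists a, (S i). split; [lia|]. rewrite gpow_nat_Sr. now group_simpl.
  - replace (gmul (ginv t) (gmul gone t)) with (@gone H) by now group_simpl. apply gen_one.
  - replace (gmul (ginv t) (gmul (gmul x y) t))
      with (gmul (gmul (ginv t) (gmul x t)) (gmul (ginv t) (gmul y t))) by now group_simpl.
    now apply gen_mul.
  - replace (gmul (ginv t) (gmul (ginv x) t))
      with (ginv (gmul (ginv t) (gmul x t))) by now group_simpl.
    now apply gen_inv.
Qed.

Lemma level_gen_S m h :
  level_gen (S m) h -> Alevel m h \/ exists y, Alevel m y /\ h = gmul (ginv t) (gmul y t).
Proof.
  intros (a & i & hi & ->). destruct (Nat.eq_dec i (S m)) as [->|ne].
  - right. exists (gmul (ginv (gpow_nat t m)) (gmul (jA a) (gpow_nat t m))). split.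
    + apply gen_base. now exists a, m.
    + rewrite gpow_nat_Sr. now group_simpl.
  - left. apply gen_base. exists a, i. split; [lia|easy].
Qed.

Definition pair_in_level m (ab : H * H) : Prop := Alevel m (fst ab) /\ Alevel m (snd ab).

Definition alt_form m (z : H) : Prop :=
  exists l x, Forall (pair_in_level m) l /\ Alevel m x /\ z = gmul (alt_word t l) x.

Lemma alt_form_one m : alt_form m gone.
Proof.
  exists [], gone. repeat split; [constructor | apply gen_one | now rewrite alt_word_nil, gone_l].
Qed.

Lemma alt_form_mul_level m y z : Alevel m y -> alt_form m z -> alt_form m (gmul y z).
Proof.
  intros hy (l & x & hl & hx & ->). destruct hl as [|[a b] l [ha hb] hl].
  - exists [], (gmul y x). repeat split; [constructor | now apply gen_mul |].
    rewrite !alt_word_nil. now group_simpl.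
  - exists ((gmul y a, b) :: l), x. repeat split; auto.
    + constructor; [split; [now apply gen_mul | easy] | easy].
    + rewrite !alt_word_cons. now group_simpl.
Qed.

Lemma alt_form_mul_conj m y z :
  Alevel m y -> alt_form m z -> alt_form m (gmul (gmul (ginv t) (gmul y t)) z).
Proof.
  intros hy (l & x & hl & hx & ->). exists ((gone, y) :: l), x. repeat split; auto.
  - constructor; [split; [apply gen_one | exact hy] | exact hl].
  - rewrite alt_word_cons. now group_simpl.
Qed.

Lemma Alevel_S_alt_form m x : Alevel (S m) x -> alt_form m x.
Proof.
  revert x. apply gen_ind_left; [apply alt_form_one| |];
    intros s z hs hz; destruct (level_gen_S m s hs) as [hs' | (y & hy & ->)].
  - now apply alt_form_mul_level.
  - now apply alt_form_mul_conj.
  - apply alt_form_mul_level; [now apply gen_inv | exact hz].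
  - replace (ginv (gmul (ginv t) (gmul y t))) with (gmul (ginv t) (gmul (ginv y) t))
      by now group_simpl.
    apply alt_form_mul_conj; [now apply gen_inv | exact hz].
Qed.

Definition tpow_level_form (h : H) : Prop :=
  exists j j' m c, Alevel m c /\ h = gmul (gpow_nat t j) (gmul c (ginv (gpow_nat t j'))).

Lemma tpow_level_form_t z : tpow_level_form z -> tpow_level_form (gmul t z).
Proof.
  intros (j & j' & m & c & hc & ->). exists (S j), j', m, c. split; [exact hc|].
  cbn [gpow_nat]. now group_simpl.
Qed.

Lemma tpow_level_form_tinv z : tpow_level_form z -> tpow_level_form (gmul (ginv t) z).
Proof.
  intros ([|j] & j' & m & c & hc & ->).
  - exists 0, (S j'), (S m), (gmul (ginv t) (gmul c t)). split; [now apply Alevel_conj|].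
    rewrite gpow_nat_Sr. cbn [gpow_nat]. now group_simpl.
  - exists j, j', m, c. split; [exact hc|]. cbn [gpow_nat]. now group_simpl.
Qed.

Lemma tpow_level_form_jA a z : tpow_level_form z -> tpow_level_form (gmul (jA a) z).
Proof.
  intros (j & j' & m & c & hc & ->).
  exists j, j', (Nat.max j m), (gmul (gmul (ginv (gpow_nat t j)) (gmul (jA a) (gpow_nat t j))) c).
  split; [|now group_simpl].
  apply gen_mul.
  - apply gen_base. exists a, j. split; [lia|easy].
  - apply (Alevel_mono m); [lia|exact hc].
Qed.

Lemma tpow_level_form_all :
  (forall h, gen (fun h => (exists a, h = jA a) \/ h = t) h) -> forall h, tpow_level_form h.
Proof.
  intros hgen h. generalize (hgen h). revert h. apply gen_ind_left.
  - exists 0, 0, 0, gone. split; [apply gen_one|]. cbn. now group_simpl.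
  - intros s z [(a & ->) | ->] hz.
    + now apply tpow_level_form_jA.
    + now apply tpow_level_form_t.
  - intros s z [(a & ->) | ->] hz.
    + rewrite <- hom_inv by exact hjA. now apply tpow_level_form_jA.
    + now apply tpow_level_form_tinv.
Qed.

Section Degree.
Variable p : H -> Zgroup.
Hypotheses (hp : is_hom p) (hpt : p t = 1%Z) (hpA : forall a, p (jA a) = 0%Z).

Lemma deg_mul x y : p (gmul x y) = (p x + p y)%Z.
Proof. apply hp. Qed.

Lemma deg_inv x : p (ginv x) = (- p x)%Z.
Proof. exact (hom_inv p hp x). Qed.

Lemma deg_gpow_nat j : p (gpow_nat t j) = Z.of_nat j.
Proof.
  induction j as [|j IH]; [exact (hom_one p hp)|].
  cbn [gpow_nat]. rewrite deg_mul, IH, hpt. lia.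
Qed.

Lemma deg_Alevel m h : Alevel m h -> p h = 0%Z.
Proof.
  intro gh. induction gh as [x (a & i & _ & ->)| |x y _ IHx _ IHy|x _ IH].
  - rewrite !deg_mul, deg_inv, hpA. lia.
  - exact (hom_one p hp).
  - rewrite deg_mul. lia.
  - rewrite deg_inv. lia.
Qed.

Lemma tpow_level_form_deg1 w :
  tpow_level_form w -> p w = 1%Z -> exists m g c, Alevel m c /\ conj_by g w = gmul c t.
Proof.
  intros (j & j' & m & c & hc & ->) hw.
  rewrite !deg_mul, deg_inv, !deg_gpow_nat, (deg_Alevel m c hc) in hw.
  replace j with (S j') in * by lia.
  exists m, (gmul c (ginv (gpow_nat t j'))), c. split; [exact hc|].
  unfold conj_by. rewrite gpow_nat_Sr. now group_simpl.
Qed.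

End Degree.

Definition alt_conj m (w : H) l x : Prop :=
  Forall (pair_in_level m) l /\ Alevel m x /\
  exists g, conj_by g w = gmul (alt_word t l) (gmul x t).

Section Reduction.
Variables (C : Group) (iP iN : C -> A).
Hypothesis rel : forall c, jA (iN c) = gmul t (gmul (jA (iP c)) (ginv t)).

Lemma Asub_of_nat m h : Asub iN jA t (Z.of_nat m) h <-> Alevel m h.
Proof.
  unfold Asub. replace (0 <=? Z.of_nat m)%Z with true by (symmetry; apply Z.leb_le; lia).
  split; apply gen_mono; intros x (a & i & hi & ->); exists a, i;
    rewrite ?gpow_of_nat, ?gpow_opp_of_nat; split; solve [lia | easy].
Qed.

Definition Abelow (m : nat) : H -> Prop := Asub iN jA t (Z.of_nat m - 1).

Lemma Abelow_S m h : Abelow (S m) h -> Alevel m h.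
Proof.
  unfold Abelow. replace (Z.of_nat (S m) - 1)%Z with (Z.of_nat m) by lia.
  apply Asub_of_nat.
Qed.

Lemma Abelow_Alevel m h : Abelow m h -> Alevel m h.
Proof.
  destruct m as [|m].
  - intros [c ->]. apply jA_Alevel.
  - intro hh. apply (Alevel_mono m); [lia | now apply Abelow_S].
Qed.

Lemma Abelow_conj m h : Abelow m h -> Alevel m (gmul (ginv t) (gmul h t)).
Proof.
  destruct m as [|m].
  - intros [c ->]. rewrite rel. group_simpl. apply jA_Alevel.
  - intro hh. now apply Alevel_conj, Abelow_S.
Qed.

Definition reducible m (ab : H * H) : Prop :=
  Abelow m (gmul t (gmul (fst ab) (ginv t))) \/ Abelow m (snd ab).

Lemma alt_conj_shorten_snd m w l1 a b l2 x :
  alt_conj m w (l1 ++ (a, b) :: l2) x -> Abelow m b ->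
  exists l' x', length l' < length (l1 ++ (a, b) :: l2) /\ alt_conj m w l' x'.
Proof.
  intros (hl & hx & g & hg) hb.
  apply Forall_app in hl as [hl1 [[ha _] hl2]%Forall_cons_iff].
  set (ab := gmul a (gmul (ginv t) (gmul b t))).
  assert (hab : Alevel m ab) by (apply gen_mul; [exact ha | now apply Abelow_conj]).
  rewrite length_app. cbn [length].
  destruct l2 as [|[a2 b2] l3].
  - exists l1, (gmul ab x). split; [lia|]. repeat split; [exact hl1 | now apply gen_mul |].
    exists g. rewrite hg, alt_word_app, alt_word_single. unfold ab. now group_simpl.
  - apply Forall_cons_iff in hl2 as [[ha2 hb2] hl3].
    exists (l1 ++ (gmul ab a2, b2) :: l3), x. split; [rewrite length_app; cbn; lia|].
    repeat split; [| exact hx |].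
    + apply Forall_app. split; [exact hl1|]. constructor; [split; [now apply gen_mul | exact hb2] | exact hl3].
    + exists g. now rewrite hg, !alt_word_app, alt_word_merge_next.
Qed.

Lemma alt_conj_shorten_fst m w l1 a b l2 x :
  alt_conj m w (l1 ++ (a, b) :: l2) x -> Abelow m (gmul t (gmul a (ginv t))) ->
  exists l' x', length l' < length (l1 ++ (a, b) :: l2) /\ alt_conj m w l' x'.
Proof.
  intros (hl & hx & g & hg) ha.
  apply Forall_app in hl as [hl1 [[_ hb] hl2]%Forall_cons_iff].
  set (y := gmul t (gmul a (ginv t))) in ha.
  assert (hy : Alevel m y) by now apply Abelow_Alevel.
  replace a with (gmul (ginv t) (gmul y t)) in hg by (unfold y; now group_simpl).
  rewrite length_app. cbn [length].
  destruct l1 as [|[a0 b0] l0 _] using rev_ind.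
  - exists l2, (gmul x (gmul y b)). split; [cbn; lia|].
    repeat split; [exact hl2 | apply gen_mul; [exact hx | now apply gen_mul] |].
    exists (gmul (gmul (ginv t) (gmul (ginv (gmul y b)) t)) g).
    now rewrite conj_by_mul, hg, app_nil_l, conj_alt_word_rotate.
  - apply Forall_app in hl1 as [hl0 [[ha0 hb0] _]%Forall_cons_iff].
    exists (l0 ++ (a0, gmul b0 (gmul y b)) :: l2), x.
    split; [rewrite !length_app; cbn; lia|].
    repeat split; [| exact hx |].
    + apply Forall_app. split; [exact hl0|].
      constructor; [split; [exact ha0 | apply gen_mul; [exact hb0 | now apply gen_mul]] | exact hl2].
    + exists g. rewrite hg, <- app_assoc. cbn [app].
      now rewrite !alt_word_app, alt_word_merge_prev.
Qed.

Lemma alt_conj_shorten m w l x :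
  alt_conj m w l x -> Exists (reducible m) l ->
  exists l' x', length l' < length l /\ alt_conj m w l' x'.
Proof.
  intros hc ((a, b) & hin & hred)%Exists_exists.
  apply in_split in hin as (l1 & l2 & ->).
  destruct hred as [ha | hb].
  - now apply (alt_conj_shorten_fst m w l1 a b l2 x).
  - now apply (alt_conj_shorten_snd m w l1 a b l2 x).
Qed.

Definition reduced_conjugate (w : H) : Prop :=
  (exists g a, conj_by g w = gmul (jA a) t) \/
  exists m l x, l <> [] /\ Forall (fun ab => ~ reducible m ab) l /\ alt_conj m w l x.

Lemma alt_conj_reduced_of_nil m w :
  (forall x, alt_conj m w [] x -> reduced_conjugate w) ->
  forall l x, alt_conj m w l x -> reduced_conjugate w.
Proof.
  intros hnil l. induction l as [l IH] using (induction_ltof1 _ (@length _)). intros x hc.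
  destruct l as [|ab l]; [exact (hnil x hc)|].
  destruct (classic (Exists (reducible m) (ab :: l))) as [hred | hirr].
  - destruct (alt_conj_shorten m w _ x hc hred) as (l' & x' & hlt & hc').
    exact (IH l' hlt x' hc').
  - right. exists m, (ab :: l), x. split; [discriminate|]. split; [|exact hc].
    now apply Forall_Exists_neg.
Qed.

Lemma alt_conj_reduced m w l x : alt_conj m w l x -> reduced_conjugate w.
Proof.
  revert l x. induction m as [|m IH]; apply alt_conj_reduced_of_nil; intros x (_ & hx & g & hg).
  - left. destruct (Alevel0 x hx) as [a ->]. exists g, a. now rewrite hg, alt_word_nil, gone_l.
  - destruct (Alevel_S_alt_form m x hx) as (l & x' & hl & hx' & ->).
    apply (IH l x'). repeat split; [exact hl | exact hx' |].
    exists g. rewrite hg, alt_word_nil. now group_simpl.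
Qed.

End Reduction.
End Levels.

Theorem lemma6p2 (A C H : Group) (iP iN : C -> A) (jA : A -> H) (t : H)
  (p : H -> Zgroup) (w : H) :
  is_hom iP -> is_hom iN ->
  (forall c1 c2, iP c1 = iP c2 -> c1 = c2) ->
  (forall c1 c2, iN c1 = iN c2 -> c1 = c2) ->
  is_HNN iP iN jA t ->
  is_hom p -> p t = 1%Z -> (forall a, p (jA a) = 0%Z) ->
  p w = 1%Z ->
  (exists (g : H) (a : A), conj_by g w = gmul (jA a) t) \/
  (exists (k : Z) (g : H) (l : list (H * H)) (x : H),
      (0 < k)%Z /\ 1 <= length l /\
      (forall ab, In ab l ->
         Asub iN jA t (k - 1) (fst ab) /\
         ~ Asub iN jA t (k - 2) (gmul t (gmul (fst ab) (ginv t))) /\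
         Asub iN jA t (k - 1) (snd ab) /\
         ~ Asub iN jA t (k - 2) (snd ab)) /\
      Asub iN jA t (k - 1) x /\
      conj_by g w = gmul (alt_word t l) (gmul x t)).
Proof.
  intros _ _ _ _ hHNN hp hpt hpA hw.
  pose proof hHNN as (hjA & rel & _).
  assert (hform := tpow_level_form_all A H jA t hjA (HNN_generated A C H iP iN jA t hHNN) w).
  destruct (tpow_level_form_deg1 A H jA t p hp hpt hpA w hform hw) as (m & g & c & hc & hg).
  assert (hc' : alt_conj A H jA t m w [] c).
  { repeat split; [constructor | exact hc |]. exists g. now rewrite hg, alt_word_nil, gone_l. }
  destruct (alt_conj_reduced A H jA t hjA C iP iN rel m w [] c hc')
    as [hconj | (k & l & x & hl & hirr & hpairs & hx & g' & hg')]; [now left | right].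
  exists (Z.of_nat (S k)), g', l, x.
  replace (Z.of_nat (S k) - 1)%Z with (Z.of_nat k) by lia.
  replace (Z.of_nat (S k) - 2)%Z with (Z.of_nat k - 1)%Z by lia.
  split; [lia|]. split; [destruct l; [congruence | cbn; lia]|].
  split; [|split; [now apply Asub_of_nat | exact hg']].
  intros ab hin.
  rewrite Forall_forall in hpairs, hirr.
  destruct (hpairs ab hin) as [ha hb]. specialize (hirr ab hin).
  unfold reducible, Abelow in hirr.
  rewrite !Asub_of_nat. tauto.
Qed.
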